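(* For every prime $p$, \[ \overline{M}(p)=p\,f(p)-1+\sum_{j=2}^{p} f\!\left(\left\lfloor \frac{p}{j}\right\rfloor\right). \]
   Context: For a nonempty finite set $A$ of positive integers, $(A)$ denotes the greatest common divisor of the elements of $A$. For $m\in\mathbb{N}$, $f(m)$ is the number of nonempty subsets $A\subseteq\{1,2,\ldots,m\}$ with $(A)=1$. For $n\in\mathbb{N}$, \[ \overline{M}(n)=\sum_{\substack{\emptyset\ne A\subseteq\{1,\ldots,n\}\\ \gcd((A),n)=1}}\gcd((A)-1,n), \] with the convention $\gcd(0,n)=n$. *)

From mathcomp Require Import all_boot.
Set Implicit Arguments. Unset Strict Implicit. Unset Printing Implicit Defensive.

(* Subsets of {1,...,m} are represented as sets A : {set 'I_m.+1} with 0 \notin A. *)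
Definition subsets_1m (m : nat) : {set {set 'I_m.+1}} :=
  [set A : {set 'I_m.+1} | (A != set0) && (ord0 \notin A)].

Definition gcdset (m : nat) (A : {set 'I_m.+1}) : nat :=
  \big[gcdn/0]_(i in A) (i : nat).

Definition f (m : nat) : nat :=
  #|[set A in subsets_1m m | gcdset A == 1]|.

(* Mbar(n) = sum over nonempty A of {1..n} with gcd((A),n)=1 of gcd((A)-1, n),
   with gcd(0,n) = n (which holds for gcdn). *)
Definition Mbar (n : nat) : nat :=
  \sum_(A in subsets_1m n | coprime (gcdset A) n) gcdn (gcdset A).-1 n.

From mathcomp Require Import all_boot all_algebra.

(* Every nonempty A ⊆ {1,…,m} has gcd (A) = d for a unique d ∈ {1,…,m}, so any
   sum over such A of a function of (A) can be regrouped by the value d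
   (sum_by_gcd).  Multiplication by d maps the subsets of {1,…,m/d} with gcd 1
   bijectively onto the subsets of {1,…,m} with gcd d, hence exactly f(m/d)
   subsets of {1,…,m} have gcd d (card_gcdset_eq).
   For a prime p the regrouped sum defining Mbar(p) is then explicit: d = p is
   excluded (p is not coprime to p), d = 1 contributes f(p) subsets of weight
   gcd(0,p) = p, and every 1 < d < p contributes f(p/d) subsets of weight
   gcd(d-1,p) = 1 (Mbar_prime).  Since f(1) = 1, the term j = p of the sum in
   the statement is the 1 that is subtracted, which gives the theorem. *)

Lemma gcdset_dvd {m : nat} {A : {set 'I_m.+1}} {i : 'I_m.+1} :
  i \in A -> gcdset A %| i.
Proof. by move=> iA; rewrite /gcdset (biggcdn_inf i). Qed.

Lemma gcdset_bounds {m : nat} {A : {set 'I_m.+1}} :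
  A \in subsets_1m m -> 0 < gcdset A <= m.
Proof.
rewrite inE => /andP[/set0Pn[i iA] A0].
have i_gt0 : 0 < i.
  rewrite lt0n; apply: contraNneq A0 => i0.
  by rewrite (_ : ord0 = i) //; apply: val_inj.
have dvd_i := gcdset_dvd iA.
by rewrite (dvdn_gt0 i_gt0 dvd_i) (leq_trans (dvdn_leq i_gt0 dvd_i)) ?leq_ord.
Qed.

Section Scaling.
Variables (m d : nat).
Hypothesis d_gt0 : 0 < d.

Definition scale (i : 'I_(m %/ d).+1) : 'I_m.+1 := inord (i * d).

Lemma scaleE (i : 'I_(m %/ d).+1) : scale i = i * d :> nat.
Proof.
rewrite inordK // ltnS (leq_trans _ (leq_divM m d)) // leq_mul2r.
by rewrite -ltnS ltn_ord orbT.
Qed.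

Lemma scale_inj : injective scale.
Proof.
move=> i j /(congr1 val) /eqP /=; rewrite !scaleE eqn_pmul2r //.
by move=> /eqP /val_inj.
Qed.

Lemma scale0 : scale ord0 = ord0.
Proof. by apply: val_inj; rewrite /= scaleE. Qed.

Lemma gcdset_scale (B : {set 'I_(m %/ d).+1}) :
  gcdset (scale @: B) = gcdset B * d.
Proof.
rewrite /gcdset big_imset /=; last by move=> i j _ _; apply: scale_inj.
under eq_bigr do rewrite scaleE.
by apply/esym/(big_morph (fun x => x * d)) => // x y; rewrite muln_gcdl.
Qed.

Lemma subsets_scale (B : {set 'I_(m %/ d).+1}) :
  (scale @: B \in subsets_1m m) = (B \in subsets_1m (m %/ d)).
Proof. by rewrite !inE imset_eq0 -scale0 (mem_imset _ _ scale_inj). Qed.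

Lemma scale_preimK (A : {set 'I_m.+1}) :
  (forall i, i \in A -> d %| i) -> scale @: (scale @^-1: A) = A.
Proof.
move=> dvdA; apply/setP => j; apply/imsetP/idP => [[i] | jA].
  by rewrite inE => iA ->.
have j_lt : j %/ d < (m %/ d).+1 by rewrite ltnS leq_div2r // -ltnS.
have scale_j : scale (Ordinal j_lt) = j.
  by apply: val_inj; rewrite /= scaleE /= divnK ?dvdA.
by exists (Ordinal j_lt); rewrite // inE scale_j.
Qed.

Lemma card_gcdset_eq : #|[set A in subsets_1m m | gcdset A == d]| = f (m %/ d).
Proof.
rewrite /f -(card_imset _ (imset_inj scale_inj)); apply: eq_card => A.
rewrite inE; apply/andP/imsetP => [[SA /eqP gA] | [B]].
  have dvdA i : i \in A -> d %| i by rewrite -gA; apply: gcdset_dvd.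
  exists (scale @^-1: A); last by rewrite scale_preimK.
  rewrite inE -subsets_scale scale_preimK // SA /=.
  by rewrite -(eqn_pmul2r d_gt0) mul1n -gcdset_scale scale_preimK // gA.
rewrite inE => /andP[SB /eqP gB] ->.
by rewrite subsets_scale gcdset_scale gB mul1n.
Qed.

End Scaling.

Lemma sum_by_gcd (m : nat) (F : nat -> nat) :
  \sum_(A in subsets_1m m) F (gcdset A) =
  \sum_(d < m.+1) #|[set A in subsets_1m m | gcdset A == d]| * F d.
Proof.
rewrite (partition_big (fun A => inord (gcdset A) : 'I_m.+1) predT) //.
apply: eq_bigr => d _; rewrite -sum_nat_const; apply/esym.
apply: eq_big => [A | A]; last by rewrite inE => /andP[_ /eqP ->].
rewrite inE; case SA: (A \in subsets_1m m) => //=.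
have /andP[_ gA_le] := gcdset_bounds SA.
apply/eqP/eqP => [gA | <-]; last by rewrite inordK.
by apply: val_inj; rewrite /= inordK // gA.
Qed.

Lemma f1 : f 1 = 1.
Proof.
rewrite /f -[RHS](cards1 [set ord_max : 'I_2]); apply: eq_card => A.
rewrite !inE; apply/idP/eqP => [/andP[/andP[A_n0 A0] _] | ->].
  have : A \subset [set ord_max].
    apply/subsetP => i; rewrite inE; case: i => [[|[|//]] i_lt] iA //.
    by move: A0; rewrite (_ : ord0 = Ordinal i_lt) ?iA //; apply: val_inj.
  by rewrite subset1 (negbTE A_n0) orbF => /eqP.
by rewrite -card_gt0 cards1 inE /gcdset big_set1.
Qed.

Lemma coprime_lt_prime (p k : nat) : prime p -> 0 < k < p -> coprime k p.
Proof.
by move=> p_pr /andP[k_gt0 k_lt]; rewrite coprime_sym prime_coprime ?gtnNdvd.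
Qed.

Lemma Mbar_prime (p : nat) : prime p ->
  Mbar p = p * f p + \sum_(2 <= d < p) f (p %/ d).
Proof.
move=> p_pr; have p_gt1 := prime_gt1 p_pr.
pose weight d := if coprime d p then gcdn d.-1 p else 0.
have weight0 : weight 0 = 0 by rewrite /weight /coprime gcd0n gtn_eqF.
have weight1 : weight 1 = p by rewrite /weight coprime1n gcd0n.
have weightp : weight p = 0 by rewrite /weight /coprime gcdnn gtn_eqF.
have weight_mid d : 1 < d < p -> weight d = 1.
  case/andP=> d_gt1 d_lt; have d_gt0 := ltnW d_gt1.
  rewrite /weight coprime_lt_prime ?d_gt0 //; apply/eqP/coprime_lt_prime => //.
  by rewrite -ltnS prednK // d_gt1 (ltnW d_lt).
rewrite /Mbar big_mkcondr (sum_by_gcd p weight) /=.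
rewrite -(big_mkord xpredT
  (fun d => #|[set A in subsets_1m p | gcdset A == d]| * weight d)).
rewrite big_ltn // weight0 muln0 add0n.
rewrite big_ltn; last by rewrite ltnS (ltnW p_gt1).
rewrite card_gcdset_eq // divn1 weight1 mulnC.
rewrite big_nat_recr /=; last exact: p_gt1.
rewrite weightp muln0 addn0; congr (_ + _).
apply: eq_big_nat => d /andP[d_ge2 d_lt].
by rewrite card_gcdset_eq ?(ltnW d_ge2) // weight_mid ?d_ge2 // muln1.
Qed.

Theorem mainTheorem5 (p : nat) : prime p ->
  ((Mbar p)%:Z = (p * f p)%:Z - 1 + (\sum_(2 <= j < p.+1) f (p %/ j))%:Z)%R.
Proof.
move=> p_pr; have p_gt1 := prime_gt1 p_pr.
rewrite Mbar_prime // big_nat_recr /=; last exact: p_gt1.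
rewrite divnn (ltnW p_gt1) f1.
by rewrite !PoszD GRing.addrCA GRing.subrK GRing.addrC.
Qed.
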